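(* Let $\mathcal H$ be a non-binary MMP hypergraph of hypergraph-dimension $n\ge 3$ with $k$ vertices and $l$ hyperedges. Then $\mathcal H$ satisfies the v-inequality $$HI_{cm}\le HI_{cM}\le HI^m_{cM}<HI_q=l .$$
   Context: A hypergraph $\mathcal H=(V,E)$ consists of a finite vertex set $V$ and a family $E$ of subsets of $V$ (hyperedges). An MMP hypergraph of hypergraph-dimension $n\ge3$ is a connected hypergraph in which: every vertex belongs to at least one hyperedge; every hyperedge contains at least $2$ and at most $n$ vertices; no hyperedge shares only one vertex with another hyperedge; and any two hyperedges intersect in at most $n-2$ vertices. Consider assignments of values $0$ and $1$ to the vertices and the two rules: (i) no two vertices within any hyperedge are both assigned $1$; (ii) in every hyperedge not all vertices are assigned $0$. $\mathcal H$ is non-binary if no $0$-$1$ assignment satisfies both (i) and (ii), and binary otherwise. The multiplicity $m(v)$ of a vertex is the number of hyperedges containing it. A classical assignment is a $0$-$1$ assignment satisfying rule (i) in which no further vertex can be switched from $0$ to $1$ without violating (i) (for binary hypergraphs this includes the assignments satisfying (i) and (ii)). The classical vertex index $HI_c$ of a classical assignment is the number of vertices assigned $1$; $HI_{cM}$ and $HI_{cm}$ are its maximum and minimum over classical assignments. The classical multiplexed vertex index $HI^m_c$ of a classical assignment is $\sum_{v \text{ assigned } 1} m(v)$, and $HI^m_{cM}$ is its maximum over classical assignments. The quantum hypergraph index $HI_q$ is the sum over all hyperedges $E_j$ of the detection probabilities $1/\kappa(j)$ of each of the $\kappa(j)$ considered vertices of $E_j$ (a vertex in several hyperedges counted once per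 hyperedge); it equals $l$. *)

From HB Require Import structures.
From mathcomp Require Import all_boot all_order all_algebra.
Set Implicit Arguments. Unset Strict Implicit. Unset Printing Implicit Defensive.
Import Order.TTheory GRing.Theory Num.Theory.

Section Hyp.
Variable V : finType.
Variable E : {set {set V}}.

Definition hadj : rel V := fun x y => [exists e in E, (x \in e) && (y \in e)].

Definition hconnected : Prop := forall u v : V, connect hadj u v.

Definition MMP (n : nat) : Prop :=
  3 <= n /\
  [/\ hconnected,
      (forall v : V, exists2 e, e \in E & v \in e),
      (forall e, e \in E -> 2 <= #|e| <= n),
      (forall e1 e2, e1 \in E -> e2 \in E -> e1 != e2 -> #|e1 :&: e2| != 1) &
      (forall e1 e2, e1 \in E -> e2 \in E -> e1 != e2 -> #|e1 :&: e2| <= n - 2)].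

(* A 0-1 assignment is represented by the set A of vertices assigned 1. *)
Definition rule1 (A : {set V}) : Prop := forall e, e \in E -> #|e :&: A| <= 1.
Definition rule2 (A : {set V}) : Prop := forall e, e \in E -> e :&: A != set0.

Definition non_binary : Prop := ~ exists A : {set V}, rule1 A /\ rule2 A.

Definition classicalb (A : {set V}) : bool :=
  [forall e in E, #|e :&: A| <= 1] &&
  [forall v, (v \notin A) ==> ~~ [forall e in E, #|e :&: (v |: A)| <= 1]].

Definition mult (v : V) : nat := #|[set e in E | v \in e]|.

Definition HIcM : nat := \max_(A : {set V} | classicalb A) #|A|.
Definition HIcm : nat := \big[minn/#|V|]_(A : {set V} | classicalb A) #|A|.
Definition HImcM : nat := \max_(A : {set V} | classicalb A) \sum_(v in A) mult v.
(* quantum index: sum over hyperedges of the detection probabilities 1/|E_j| *)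
Definition HIq : rat := \sum_(e in E) \sum_(v in e) (#|e|%:R)^-1.
End Hyp.

From mathcomp Require Import all_boot all_order all_algebra.
Import Order.TTheory GRing.Theory Num.Theory.

(* A classical assignment A meets every hyperedge at most once, so double
   counting gives sum_(v in A) m(v) = sum_(e in E) |e :&: A| <= |E|; since
   the hypergraph is non-binary, A misses some hyperedge and the bound is
   strict. Each hyperedge contributes exactly 1 to HI_q, so HI_q = |E|. The
   two remaining inequalities hold because classical assignments exist (take
   a largest set obeying rule (i)) and every vertex has multiplicity >= 1. *)

Section Hypergraph.
Variable V : finType.
Variable E : {set {set V}}.

Lemma rule1P (A : {set V}) :
  reflect (rule1 E A) [forall e in E, #|e :&: A| <= 1].
Proof. exact: forall_inP. Qed.

Lemma classical_exists : exists A, classicalb E A.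
Proof.
pose independent (A : {set V}) := [forall e in E, #|e :&: A| <= 1].
have independent_set0 : independent set0.
  by apply/forall_inP => e _; rewrite setI0 cards0.
have [A rule1A Amax] := arg_maxnP (fun A : {set V} => #|A|) independent_set0.
exists A; rewrite /classicalb -/(independent A) rule1A /=.
apply/forallP => v; apply/implyP => vA; apply/negP => /Amax.
by rewrite cardsU1 vA /geq /= ltnn.
Qed.

Lemma sum_mult_card_setI (A : {set V}) :
  \sum_(v in A) mult E v = \sum_(e in E) #|e :&: A|.
Proof.
rewrite /mult; under eq_bigr do rewrite -sum1_card.
rewrite (exchange_big_dep (mem E)) /=; last first.
  by move=> v e _; rewrite inE => /andP[].
apply: eq_bigr => e eE; rewrite -sum1_card.
by apply: eq_bigl => v; rewrite !inE eE andbC.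
Qed.

Lemma sum_mult_lt_card_edges (A : {set V}) :
  non_binary E -> rule1 E A -> \sum_(v in A) mult E v < #|E|.
Proof.
move=> nonbin rule1A.
have [e0 e0E /eqP e0A] : exists2 e, e \in E & e :&: A == set0.
  apply/exists_inP; apply: contraT; rewrite negb_exists_in => /forall_inP.
  by move=> rule2A; case: nonbin; exists A.
rewrite sum_mult_card_setI (bigD1 e0) //= e0A cards0 add0n.
rewrite (cardD1 e0) e0E add1n ltnS.
rewrite -sum1_card (eq_bigl (fun e => (e \in E) && (e != e0))); last first.
  by move=> e; rewrite !inE andbC.
by apply: leq_sum => e /andP[eE _]; apply: rule1A.
Qed.

Lemma HIcm_le_HIcM : HIcm E <= HIcM E.
Proof.
have [A classA] := classical_exists.
apply: (@leq_trans #|A|); last exact: leq_bigmax_cond.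
exact: (bigmin_le_cond #|V| (fun B : {set V} => #|B|) classA).
Qed.

Lemma HImcM_lt_card_edges : non_binary E -> HImcM E < #|E|.
Proof.
move=> nonbin; have [A0 classA0] := classical_exists.
have [|A classA maxA] :=
  eq_bigmax_cond (fun B : {set V} => \sum_(v in B) mult E v)
    (_ : 0 < #|classicalb E|); first by apply/card_gt0P; exists A0.
case/andP: classA => /rule1P rule1A _.
rewrite /HImcM (eq_bigl (mem (classicalb E))) // maxA.
exact: sum_mult_lt_card_edges.
Qed.

Lemma HIq_card_edges :
  (forall e, e \in E -> 0 < #|e|) -> HIq E = (#|E|%:R)%R.
Proof.
move=> edge_gt0; rewrite /HIq -sumr_const; apply: eq_bigr => e eE.
by rewrite sumr_const -[LHS]mulr_natl divff // pnatr_eq0 -lt0n edge_gt0.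
Qed.

Hypothesis cover : forall v : V, exists2 e, e \in E & v \in e.

Lemma mult_gt0 (v : V) : 0 < mult E v.
Proof.
have [e eE ve] := cover v.
by rewrite /mult card_gt0; apply/set0Pn; exists e; rewrite inE eE ve.
Qed.

Lemma card_le_sum_mult (A : {set V}) : #|A| <= \sum_(v in A) mult E v.
Proof. by rewrite -sum1_card; apply: leq_sum => v _; apply: mult_gt0. Qed.

Lemma HIcM_le_HImcM : HIcM E <= HImcM E.
Proof.
apply/bigmax_leqP => A classA.
exact: leq_trans (card_le_sum_mult A) (leq_bigmax_cond _ classA).
Qed.

End Hypergraph.

Theorem lemma4 (V : finType) (E : {set {set V}}) (n k l : nat) :
  MMP E n -> non_binary E -> #|V| = k -> #|E| = l ->
  [/\ (HIcm E <= HIcM E)%N, (HIcM E <= HImcM E)%N,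
      ((HImcM E)%:R < HIq E)%R & HIq E = (l%:R)%R].
Proof.
move=> [_ [_ cover edge_size _ _]] nonbin _ <-.
have HIqE : HIq E = (#|E|%:R)%R.
  by apply: HIq_card_edges => e /edge_size /andP[/ltnW].
split=> //.
- exact: HIcm_le_HIcM.
- exact: HIcM_le_HImcM.
- by rewrite HIqE ltr_nat HImcM_lt_card_edges.
Qed.
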